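(* Let $G$ be a hyperbolic group acting by cubical automorphisms on a CAT$(0)$ cube complex $X$, and let $X^b$ be the cubical subdivision of $X$ (with the induced $G$--action). Then the stabilizers of hyperplanes for the $G$--action on $X$ are all quasi-convex in $G$ if and only if the stabilizers of hyperplanes for the $G$--action on $X^b$ are all quasi-convex in $G$.
   Context: The cubical subdivision $X^b$ of a cube complex $X$ is obtained by replacing each $n$--cube of $X$ by $2^n$ $n$--cubes, subdividing each coordinate interval into two equal halves, glued in the way induced from $X$. *)

From Stdlib Require Import List Arith Bool Relations.
Import ListNotations.

Set Implicit Arguments.

Record Group := MkGroup {
  gcar :> Type;
  gmul : gcar -> gcar -> gcar;
  gone : gcar;
  ginv : gcar -> gcar;
  gassoc : forall x y z, gmul x (gmul y z) = gmul (gmul x y) z;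
  gone_l : forall x, gmul gone x = x;
  ginv_l : forall x, gmul (ginv x) x = gone
}.

Arguments gmul {g}.
Arguments gone {g}.
Arguments ginv {g}.

(* [is_path E x p y]: the vertex sequence x :: p is an edge path from x to y;
   its length is [length p]. *)
Fixpoint is_path {T : Type} (E : T -> T -> Prop) (x : T) (p : list T) (y : T)
  : Prop :=
  match p with
  | [] => x = y
  | z :: q => E x z /\ is_path E z q y
  end.

Definition geodesic {T : Type} (E : T -> T -> Prop) (x : T) (p : list T) (y : T)
  : Prop :=
  is_path E x p y /\ forall q, is_path E x q y -> length p <= length q.

Definition dist_le {T : Type} (E : T -> T -> Prop) (x y : T) (n : nat) : Prop :=
  exists p, is_path E x p y /\ length p <= n.

Definition in_interval {T : Type} (E : T -> T -> Prop) (x y m : T) : Prop :=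
  exists p q, geodesic E x (p ++ q) y /\ is_path E x p m.

Definition cay_adj (G : Group) (S : list G) (x y : G) : Prop :=
  exists s, In s S /\ (y = gmul x s \/ y = gmul x (ginv s)).

Definition generates (G : Group) (S : list G) : Prop :=
  forall g : G, exists p, is_path (@cay_adj G S) gone p g.

Definition hyperbolic_wrt (G : Group) (S : list G) : Prop :=
  exists delta : nat, forall (x y z : G) (p q r : list G),
    geodesic (@cay_adj G S) x p y -> geodesic (@cay_adj G S) y q z ->
    geodesic (@cay_adj G S) z r x ->
    forall v, In v (x :: p) ->
      exists w, (In w (y :: q) \/ In w (z :: r)) /\ dist_le (@cay_adj G S) v w delta.

Definition quasiconvex_wrt (G : Group) (S : list G) (H : G -> Prop) : Prop :=
  exists K : nat, forall (x y : G) (p : list G),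
    H x -> H y -> geodesic (@cay_adj G S) x p y ->
    forall v, In v (x :: p) -> exists h, H h /\ dist_le (@cay_adj G S) v h K.

(** * CAT(0) cube complexes, modelled by their 1-skeleta (median graphs) *)
Definition median_graph {V : Type} (E : V -> V -> Prop) : Prop :=
  (forall x y, E x y -> E y x) /\
  (forall x, ~ E x x) /\
  (forall x y, exists p, is_path E x p y) /\
  (forall x y z, exists m,
      (in_interval E x y m /\ in_interval E y z m /\ in_interval E x z m) /\
      forall m', in_interval E x y m' -> in_interval E y z m' ->
                 in_interval E x z m' -> m' = m).

Fixpoint hamming (l1 l2 : list bool) : nat :=
  match l1, l2 with
  | b1 :: t1, b2 :: t2 => (if Bool.eqb b1 b2 then 0 else 1) + hamming t1 t2
  | _, _ => 0
  end.

(* C (a set of vertices) spans an n-cube: the induced subgraph on C is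
   isomorphic to the hypercube graph Q_n (vertices = bit strings of length n). *)
Definition is_cube {V : Type} (E : V -> V -> Prop) (C : V -> Prop) (n : nat)
  : Prop :=
  exists f : list bool -> V,
    (forall l, length l = n -> C (f l)) /\
    (forall v, C v -> exists l, length l = n /\ f l = v) /\
    (forall l l', length l = n -> length l' = n -> f l = f l' -> l = l') /\
    (forall l l', length l = n -> length l' = n ->
        (E (f l) (f l') <-> hamming l l' = 1)).

(** * Cubical subdivision: its 1-skeleton has one vertex per cube of X, two
      cubes being adjacent iff one is a codimension-1 face of the other.
      Vertices of the subdivision are represented by sets of vertices of X;
      sets that are not cubes are isolated and carry no edges. *)
Definition subdiv_adj {V : Type} (E : V -> V -> Prop) (C D : V -> Prop) : Prop :=
  exists n,
    (is_cube E C n /\ is_cube E D (S n) /\ (forall v, C v -> D v)) \/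
    (is_cube E D n /\ is_cube E C (S n) /\ (forall v, D v -> C v)).

Definition image_act {G : Group} {V : Type} (act : G -> V -> V)
  (g : G) (C : V -> Prop) : V -> Prop :=
  fun v => exists w, C w /\ act g w = v.

Definition is_action (G : Group) {V : Type} (act : G -> V -> V) : Prop :=
  (forall v, act gone v = v) /\
  (forall (g h : G) v, act (gmul g h) v = act g (act h v)).

(** * Hyperplanes: classes of (oriented) edges under the equivalence relation
      generated by "opposite edges of a square" and edge reversal. *)
Definition square_opp {V : Type} (E : V -> V -> Prop) (a b c d : V) : Prop :=
  E a b /\ E c d /\ E a c /\ E b d /\ a <> d /\ b <> c.

Definition edge_rel {V : Type} (E : V -> V -> Prop) (e f : V * V) : Prop :=
  square_opp E (fst e) (snd e) (fst f) (snd f) \/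
  (E (fst e) (snd e) /\ fst f = snd e /\ snd f = fst e).

Definition same_hyperplane {V : Type} (E : V -> V -> Prop) : relation (V * V) :=
  clos_refl_sym_trans (V * V) (edge_rel E).

Definition hyp_stab {G : Group} {V : Type} (E : V -> V -> Prop)
  (act : G -> V -> V) (a b : V) : G -> Prop :=
  fun g => same_hyperplane E (a, b) (act g a, act g b).

Definition all_hyp_stab_qc (G : Group) (S : list G) {V : Type}
  (E : V -> V -> Prop) (act : G -> V -> V) : Prop :=
  forall a b, E a b -> @quasiconvex_wrt G S (hyp_stab E act a b).

(* Every edge of the subdivision X^b joins a cube C of X to a cube D having C as a facet,
   and the edges of X that it crosses -- the edges of D leaving C -- are pairwise parallel.
   Opposite edges of a square of X^b cross a common edge of X, because a median graph
   contains no K_{2,3}; conversely the edges ({a}, {a,b}) of X^b over opposite edges of a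
   square of X are opposite edges of a square of X^b, and every edge of X^b is equivalent to
   one of this form.  Hence the stabiliser of a hyperplane of X^b is the stabiliser of an
   oriented hyperplane of X, a subgroup of index at most two in the stabiliser of that
   hyperplane, and in a hyperbolic group quasi-convexity passes between subgroups at finite
   Hausdorff distance. *)

From Stdlib Require Import List Arith Bool Relations Lia Classical ClassicalEpsilon
  FunctionalExtensionality PropExtensionality.
Import ListNotations.

Fixpoint flip (k : nat) (l : list bool) : list bool :=
  match l with
  | [] => []
  | b :: t => match k with 0 => negb b :: t | S k' => b :: flip k' t end
  end.

Lemma length_flip k l : length (flip k l) = length l.
Proof. revert k; induction l; intros [|k]; simpl; auto. Qed.

Lemma flip_involutive k l : flip k (flip k l) = l.
Proof.
  revert k; induction l; intros [|k]; simpl; rewrite ?negb_involutive, ?IHl; auto.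
Qed.

Lemma flip_comm j k l : flip j (flip k l) = flip k (flip j l).
Proof. revert j k; induction l; intros [|j] [|k]; simpl; try rewrite IHl; auto. Qed.

Lemma nth_flip_eq k l : k < length l -> nth k (flip k l) false = negb (nth k l false).
Proof. revert k; induction l; intros [|k] Hk; simpl in *; try lia; auto. apply IHl; lia. Qed.

Lemma nth_flip_neq i k l : i <> k -> nth i (flip k l) false = nth i l false.
Proof.
  revert i k; induction l; intros [|i] [|k] Hik; simpl; try lia; auto.
Qed.

Lemma hamming_sym l l' : hamming l l' = hamming l' l.
Proof. revert l'; induction l; intros [|b l']; simpl; auto. rewrite IHl. destruct a, b; auto. Qed.

Lemma hamming_refl l : hamming l l = 0.
Proof. induction l; simpl; auto. rewrite IHl; destruct a; auto. Qed.

Lemma hamming_eq0 l l' : length l = length l' -> hamming l l' = 0 -> l = l'.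
Proof.
  revert l'; induction l; intros [|b l'] Hl H; simpl in *; try discriminate; auto.
  destruct a, b; simpl in H; try discriminate; f_equal; apply IHl; auto.
Qed.

Lemma hamming_flip_flip k l l' : length l = length l' ->
  hamming (flip k l) (flip k l') = hamming l l'.
Proof.
  revert k l'; induction l; intros [|k] [|b l'] Hl; simpl in *; try discriminate; auto.
  all: try (destruct a, b; reflexivity).
  all: rewrite IHl; auto.
Qed.

Lemma hamming_flip k l : k < length l -> hamming l (flip k l) = 1.
Proof.
  revert k; induction l; intros [|k] Hk; simpl in *; try lia.
  - rewrite hamming_refl. destruct a; auto.
  - rewrite IHl by lia. destruct a; auto.
Qed.

Lemma hamming_flip2 j k l : j < length l -> k < length l -> j <> k ->
  hamming l (flip j (flip k l)) = 2.
Proof.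
  revert j k; induction l; intros [|j] [|k] Hj Hk Hjk; simpl in *; try lia.
  1, 2: rewrite hamming_flip by lia; destruct a; auto.
  rewrite IHl by lia. destruct a; auto.
Qed.

Lemma hamming_flip_flip_r j k l : k < length l ->
  hamming (flip j (flip k l)) (flip j l) = 1.
Proof.
  intros Hk. rewrite hamming_flip_flip, hamming_sym by (rewrite length_flip; auto).
  apply hamming_flip; auto.
Qed.

Lemma hamming_eq1 l l' : length l = length l' -> hamming l l' = 1 ->
  exists k, k < length l /\ l' = flip k l.
Proof.
  revert l'; induction l; intros [|b l'] Hl H; simpl in *; try discriminate.
  destruct (Bool.eqb a b) eqn:Eab.
  - apply Bool.eqb_prop in Eab; subst. simpl in H.
    destruct (IHl l') as [k [Hk ->]]; auto. exists (S k); split; auto; lia.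
  - simpl in H. exists 0; split; [lia|].
    assert (l = l') by (apply hamming_eq0; auto; lia). subst.
    destruct a, b; simpl in *; auto; discriminate.
Qed.

Lemma flip_inj j k l : j < length l -> k < length l -> flip j l = flip k l -> j = k.
Proof.
  intros Hj Hk H. destruct (Nat.eq_dec j k) as [|Hjk]; auto.
  assert (Hnth : nth j (flip j l) false = nth j (flip k l) false) by (rewrite H; auto).
  rewrite nth_flip_eq, nth_flip_neq in Hnth by auto. destruct (nth j l false); discriminate.
Qed.

Lemma flip_flip_neq j k l : j < length l -> k < length l -> j <> k -> flip j (flip k l) <> l.
Proof.
  intros Hj Hk Hjk Eq. pose proof (hamming_flip2 j k l Hj Hk Hjk) as H2.
  rewrite Eq, hamming_refl in H2. discriminate.
Qed.

Lemma common_neighbours_flip s t x w : s < length x -> t < length x -> s <> t ->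
  length w = length x -> hamming (flip s x) w = 1 -> hamming (flip t x) w = 1 ->
  w = x \/ w = flip s (flip t x).
Proof.
  intros Hs Ht Hst Hw H1 H2.
  apply hamming_eq1 in H1 as [r [Hr ->]]; [|rewrite length_flip; auto].
  apply hamming_eq1 in H2 as [q [Hq E2]]; [|rewrite !length_flip; auto].
  rewrite length_flip in Hr, Hq.
  destruct (Nat.eq_dec r s) as [->|Hrs]; [left; apply flip_involutive|right].
  assert (q = s).
  { apply NNPP. intros Hqs.
    assert (Hnth : nth s (flip r (flip s x)) false = nth s (flip q (flip t x)) false)
      by (rewrite E2; auto).
    rewrite (nth_flip_neq s r), nth_flip_eq, (nth_flip_neq s q), (nth_flip_neq s t)
      in Hnth by auto.
    destruct (nth s x false); discriminate. }
  subst q. assert (r = t).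
  { apply NNPP. intros Hrt.
    assert (Hnth : nth t (flip r (flip s x)) false = nth t (flip s (flip t x)) false)
      by (rewrite E2; auto).
    rewrite (nth_flip_neq t r), !(nth_flip_neq t s), nth_flip_eq in Hnth by auto.
    destruct (nth t x false); discriminate. }
  subst r. apply flip_comm.
Qed.

Lemma flip_ind x y (P : list bool -> Prop) : length x = length y -> P x ->
  (forall z k, length z = length x -> k < length x ->
     nth k z false <> nth k y false -> P z -> P (flip k z)) ->
  P y.
Proof.
  revert P y; induction x as [|a x IH]; intros P [|b y] Hl Px Hstep;
    simpl in *; try discriminate; auto.
  assert (Pay : P (a :: y)).
  { apply (IH (fun z => P (a :: z))); auto.
    intros z k Hz Hk Hn Pz. apply (Hstep (a :: z) (S k)); simpl; auto; lia. }
  destruct (Bool.bool_dec a b) as [<-|Hab]; auto.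
  apply (Hstep (a :: y) 0) in Pay; simpl; auto; try lia.
  destruct a, b; simpl in *; congruence.
Qed.

Definition flips (x : list bool) : list (list bool) :=
  map (fun k => flip k x) (seq 0 (length x)).

Lemma in_map_seq {A} (F : nat -> A) n y :
  In y (map F (seq 0 n)) <-> exists i, i < n /\ y = F i.
Proof.
  rewrite in_map_iff. split.
  - intros [i [<- Hi]]. apply in_seq in Hi. exists i; split; auto; lia.
  - intros [i [Hi ->]]. exists i; split; auto. apply in_seq; lia.
Qed.

Lemma NoDup_map_seq {A} (F : nat -> A) n :
  (forall i j, i < n -> j < n -> F i = F j -> i = j) -> NoDup (map F (seq 0 n)).
Proof.
  intros H. apply (NoDup_nth _ (F 0)). rewrite length_map, length_seq.
  intros i j Hi Hj E.
  rewrite (map_nth F (seq 0 n) 0 i), (map_nth F (seq 0 n) 0 j), !seq_nth in E by auto.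
  auto.
Qed.

Lemma in_flips x y : In y (flips x) <-> exists k, k < length x /\ y = flip k x.
Proof. apply in_map_seq. Qed.

Lemma flips_NoDup x : NoDup (flips x).
Proof. apply NoDup_map_seq. intros; eapply flip_inj; eauto. Qed.

Lemma length_flips x : length (flips x) = length x.
Proof. unfold flips. rewrite length_map, length_seq. auto. Qed.

Definition cube_embedding (n m : nat) (s : list bool -> list bool) : Prop :=
  (forall l, length l = n -> length (s l) = m) /\
  (forall l l', length l = n -> length l' = n -> s l = s l' -> l = l') /\
  (forall l l', length l = n -> length l' = n ->
     (hamming (s l) (s l') = 1 <-> hamming l l' = 1)).

Definition in_image {T : Type} (n : nat) (s : list bool -> T) (v : T) : Prop :=
  exists l, length l = n /\ s l = v.

Section CubeEmbedding.

Variables (n m : nat) (s : list bool -> list bool).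
Hypothesis s_emb : cube_embedding n m s.

Lemma cube_embedding_flip l k : length l = n -> k < n ->
  exists j, j < m /\ s (flip k l) = flip j (s l).
Proof.
  intros Hl Hk. destruct s_emb as [Hs [_ Hadj]].
  destruct (hamming_eq1 (s l) (s (flip k l))) as [j [Hj E]].
  - rewrite !Hs; rewrite ?length_flip; auto.
  - apply Hadj; rewrite ?length_flip; auto. apply hamming_flip; lia.
  - rewrite Hs in Hj by auto. eauto.
Qed.

Definition image_flips (l : list bool) : list (list bool) :=
  map (fun k => s (flip k l)) (seq 0 n).

Lemma image_flips_NoDup l : length l = n -> NoDup (image_flips l).
Proof.
  intros Hl. destruct s_emb as [_ [Hinj _]]. apply NoDup_map_seq.
  intros i j Hi Hj E. apply Hinj in E; rewrite ?length_flip; auto.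
  eapply flip_inj; eauto; lia.
Qed.

Lemma image_flips_incl l : length l = n -> incl (image_flips l) (flips (s l)).
Proof.
  intros Hl y Hy. apply in_map_seq in Hy as [k [Hk ->]].
  destruct (cube_embedding_flip l k Hl Hk) as [j [Hj ->]].
  apply in_flips. destruct s_emb as [Hs _]. rewrite Hs; eauto.
Qed.

Lemma in_image_flip l i : length l = n -> i < length (s l) ->
  in_image n s (flip i (s l)) -> In (flip i (s l)) (image_flips l).
Proof.
  intros Hl Hi [l' [Hl' E]]. destruct s_emb as [_ [_ Hadj]].
  assert (Hll' : hamming l l' = 1) by (apply Hadj; auto; rewrite E; apply hamming_flip; auto).
  apply hamming_eq1 in Hll' as [k [Hk ->]]; [|lia].
  apply in_map_seq. exists k; split; [lia|auto].
Qed.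

Lemma cube_embedding_dim_le : n <= m.
Proof.
  pose (l0 := repeat false n).
  assert (Hl0 : length l0 = n) by apply repeat_length.
  pose proof (NoDup_incl_length (image_flips_NoDup l0 Hl0) (image_flips_incl l0 Hl0)) as H.
  unfold image_flips in H. rewrite length_map, length_seq, length_flips in H.
  destruct s_emb as [Hs _]. rewrite Hs in H; auto.
Qed.

End CubeEmbedding.

(* A codimension-one subcube is a facet: at each vertex exactly one direction leaves it, and
   this direction does not depend on the vertex. *)
Section FacetEmbedding.

Variables (n : nat) (s : list bool -> list bool).
Hypothesis s_emb : cube_embedding n (S n) s.

Let s_length l : length l = n -> length (s l) = S n.
Proof. apply s_emb. Qed.

(* Counting: [s] maps the [n] neighbours of [l] to [n] distinct neighbours of [s l] in the
   image, out of [n + 1]. *)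
Lemma outward_flip_exists l : length l = n ->
  exists i, i < S n /\ ~ in_image n s (flip i (s l)).
Proof.
  intros Hl. apply NNPP. intros Hall.
  assert (Hincl : incl (flips (s l)) (image_flips n s l)).
  { intros y Hy. apply in_flips in Hy as [i [Hi ->]].
    apply (in_image_flip n (S n)); auto. apply NNPP. intros Hout. apply Hall.
    rewrite s_length in Hi by auto. eauto. }
  pose proof (NoDup_incl_length (flips_NoDup (s l)) Hincl) as H.
  unfold image_flips in H. rewrite length_map, length_seq, length_flips, s_length in H; lia.
Qed.

Lemma outward_flip_unique l i j : length l = n -> i < S n -> j < S n ->
  ~ in_image n s (flip i (s l)) -> ~ in_image n s (flip j (s l)) -> i = j.
Proof.
  intros Hl Hi Hj Ni Nj. apply NNPP. intros Hij.
  assert (Hin : forall k, ~ in_image n s (flip k (s l)) ->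
                         ~ In (flip k (s l)) (image_flips n s l)).
  { intros k Nk Hk. apply in_map_seq in Hk as [k' [Hk' E]]. apply Nk.
    exists (flip k' l). rewrite length_flip; auto. }
  assert (Hnd : NoDup (flip i (s l) :: flip j (s l) :: image_flips n s l)).
  { repeat constructor.
    - intros [E|H]; [apply flip_inj in E; rewrite ?s_length; auto; lia|].
      apply (Hin i); auto.
    - apply (Hin j); auto.
    - apply (image_flips_NoDup n (S n)); auto. }
  assert (Hincl : incl (flip i (s l) :: flip j (s l) :: image_flips n s l) (flips (s l))).
  { intros y [<-|[<-|Hy]]; [| |apply (image_flips_incl n (S n)); auto];
      apply in_flips; rewrite s_length; eauto. }
  pose proof (NoDup_incl_length Hnd Hincl) as H.
  unfold image_flips in H. simpl in H.
  rewrite length_map, length_seq, length_flips, s_length in H; lia.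
Qed.

(* Otherwise a square with three corners in the image would have its fourth corner
   [flip i (s l)] in the image as well. *)
Lemma outward_flip_flip l k i : length l = n -> k < n -> i < S n ->
  ~ in_image n s (flip i (s l)) -> ~ in_image n s (flip i (s (flip k l))).
Proof.
  intros Hl Hk Hi Ni [l2 [Hl2 E2]]. pose proof s_emb as [_ [Hinj Hadj]].
  destruct (cube_embedding_flip n (S n) s s_emb l k Hl Hk) as [j [Hj Ej]].
  assert (Hji : j <> i) by (intros ->; apply Ni; exists (flip k l); rewrite length_flip; auto).
  assert (Hsl := s_length l Hl).
  assert (H12 : hamming (flip k l) l2 = 1).
  { apply Hadj; rewrite ?length_flip; auto. rewrite E2. apply hamming_flip.
    rewrite s_length; rewrite ?length_flip; auto. }
  apply hamming_eq1 in H12 as [q [Hq ->]]; [|rewrite length_flip; lia].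
  rewrite length_flip in Hq.
  destruct (Nat.eq_dec q k) as [->|Hqk].
  { rewrite flip_involutive, Ej in E2. apply (flip_flip_neq i j (s l)); auto; lia. }
  assert (Hl3 : length (flip q l) = n) by (rewrite length_flip; auto).
  destruct (common_neighbours_flip j i (s (flip k l)) (s (flip q l))) as [E3|E3];
    try rewrite Ej, length_flip; try rewrite !s_length; auto; try lia.
  - rewrite Ej, flip_involutive. apply Hadj; auto. apply hamming_flip; lia.
  - rewrite <- E2. apply Hadj; rewrite ?length_flip; auto.
    apply hamming_flip_flip_r; lia.
  - apply Hinj in E3; rewrite ?length_flip; auto. apply flip_inj in E3; lia.
  - rewrite Ej, flip_comm, flip_involutive in E3. apply Ni. exists (flip q l); auto.
Qed.

Lemma cube_embedding_facet : exists i b, i < S n /\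
  forall v, length v = S n -> (in_image n s v <-> nth i v false = b).
Proof.
  pose (l0 := repeat false n). assert (Hl0 : length l0 = n) by apply repeat_length.
  destruct (outward_flip_exists l0 Hl0) as [i [Hi Ni]].
  assert (Hout : forall l, length l = n -> ~ in_image n s (flip i (s l))).
  { intros l Hl. apply (flip_ind l0 l); auto; try lia.
    intros z k Hz Hk _ Nz. apply outward_flip_flip; auto; lia. }
  assert (Hnth : forall l, length l = n -> nth i (s l) false = nth i (s l0) false).
  { intros l Hl. apply (flip_ind l0 l (fun z => nth i (s z) false = nth i (s l0) false));
      auto; try lia.
    intros z k Hz Hk _ Ez. rewrite Hl0 in Hz, Hk.
    destruct (cube_embedding_flip n (S n) s s_emb z k Hz Hk) as [j [Hj Ej]].
    rewrite Ej, nth_flip_neq; auto. intros ->.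
    apply (Hout z Hz). exists (flip k z). rewrite length_flip; auto. }
  exists i, (nth i (s l0) false). split; auto. intros v Hv. split.
  - intros [l [Hl <-]]. auto.
  - intros Ev. apply (flip_ind (s l0) v (in_image n s)).
    + rewrite s_length; auto.
    + exists l0; auto.
    + intros z k Hz Hk Nk [l [Hl <-]]. rewrite s_length in Hk by auto.
      destruct (Nat.eq_dec k i) as [->|Hki].
      { rewrite Hnth, Ev in Nk by auto. congruence. }
      apply NNPP. intros Nk'. apply Hki. eapply outward_flip_unique; eauto.
Qed.

End FacetEmbedding.

Definition hamming_iso (m : nat) (t : list bool -> list bool) : Prop :=
  (forall l, length l = m -> length (t l) = m) /\
  (forall l l', length l = m -> length l' = m -> hamming (t l) (t l') = hamming l l') /\
  (forall l', length l' = m -> exists l, length l = m /\ t l = l').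

Fixpoint ins (i : nat) (c : bool) (l : list bool) : list bool :=
  match i, l with
  | 0, _ => c :: l
  | S _, [] => [c]
  | S i', a :: l' => a :: ins i' c l'
  end.

Fixpoint del (i : nat) (l : list bool) : list bool :=
  match l, i with
  | [], _ => []
  | _ :: l', 0 => l'
  | a :: l', S i' => a :: del i' l'
  end.

Lemma length_ins i c l : length (ins i c l) = S (length l).
Proof. revert l; induction i; intros [|a l]; simpl; auto. Qed.

Lemma hamming_ins i c c' l l' : length l = length l' ->
  hamming (ins i c l) (ins i c' l') = (if Bool.eqb c c' then 0 else 1) + hamming l l'.
Proof.
  revert l l'; induction i; intros [|a l] [|a' l'] Hl; simpl in *; try discriminate; auto.
  rewrite IHi by auto. lia.
Qed.

Lemma nth_ins i c l : i <= length l -> nth i (ins i c l) false = c.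
Proof. revert l; induction i; intros [|a l] Hl; simpl in *; auto; try lia. apply IHi; lia. Qed.

Lemma ins_nth_del i l : i < length l -> ins i (nth i l false) (del i l) = l.
Proof.
  revert l; induction i; intros [|a l] Hl; simpl in *; try lia; auto. rewrite IHi by lia; auto.
Qed.

Lemma length_del i l : i < length l -> length (del i l) = pred (length l).
Proof.
  revert l; induction i; intros [|a l] Hl; simpl in *; try lia; auto. rewrite IHi by lia; lia.
Qed.

Definition move_head (i : nat) (b : bool) (l : list bool) : list bool :=
  match l with [] => [] | c :: l' => ins i (xorb c b) l' end.

Lemma move_head_iso i b m : i < S m -> hamming_iso (S m) (move_head i b).
Proof.
  intros Hi. split; [|split].
  - intros [|c l] Hl; simpl in *; try discriminate. rewrite length_ins; auto.
  - intros [|c l] [|c' l'] Hl Hl'; simpl in *; try discriminate.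
    rewrite hamming_ins by lia. destruct c, c', b; simpl; auto.
  - intros l' Hl'. exists (xorb (nth i l' false) b :: del i l'). split.
    + simpl. rewrite length_del; lia.
    + simpl. rewrite xorb_assoc, xorb_nilpotent, xorb_false_r. apply ins_nth_del. lia.
Qed.

Lemma nth_move_head i b c l : i <= length l -> nth i (move_head i b (c :: l)) false = xorb c b.
Proof. intros; apply nth_ins; auto. Qed.

Definition lift_head (t : list bool -> list bool) (l : list bool) : list bool :=
  match l with [] => [] | c :: l' => c :: t l' end.

Lemma lift_head_iso m t : hamming_iso m t -> hamming_iso (S m) (lift_head t).
Proof.
  intros [Tl [Th Ts]]. split; [|split].
  - intros [|c l] Hl; simpl in *; try discriminate. rewrite Tl; auto.
  - intros [|c l] [|c' l'] Hl Hl'; simpl in *; try discriminate. rewrite Th; auto.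
  - intros [|c l'] Hl'; simpl in *; try discriminate.
    destruct (Ts l') as [l [H1 H2]]; auto. exists (c :: l). simpl. rewrite H2; auto.
Qed.

Lemma pred_ext {V} (P Q : V -> Prop) : (forall v, P v <-> Q v) -> P = Q.
Proof.
  intros H. apply functional_extensionality. intros v. apply propositional_extensionality. auto.
Qed.

Section Cubes.

Context {V : Type} (E : V -> V -> Prop).

Definition cube_map (m : nat) (f : list bool -> V) : Prop :=
  (forall l l', length l = m -> length l' = m -> f l = f l' -> l = l') /\
  (forall l l', length l = m -> length l' = m -> (E (f l) (f l') <-> hamming l l' = 1)).

Definition cube_param (C : V -> Prop) (m : nat) (f : list bool -> V) : Prop :=
  (forall l, length l = m -> C (f l)) /\
  (forall v, C v -> exists l, length l = m /\ f l = v) /\ cube_map m f.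

Lemma cube_map_ins m f i b : cube_map (S m) f -> cube_map m (fun l => f (ins i b l)).
Proof.
  intros [Fi Fa]. split.
  - intros l l' Hl Hl' Eq. apply Fi in Eq; rewrite ?length_ins; auto.
    apply hamming_eq0; [lia|]. pose proof (hamming_ins i b b l l') as H.
    rewrite Eq, hamming_refl in H by lia. destruct b; simpl in H; lia.
  - intros l l' Hl Hl'. rewrite Fa, hamming_ins by (rewrite ?length_ins; lia).
    destruct b; simpl; tauto.
Qed.

Lemma is_cube_image m f : cube_map m f -> is_cube E (in_image m f) m.
Proof.
  intros Hf. exists f. split; [|split]; auto.
  intros l Hl. exists l; auto.
Qed.

Lemma cube_param_comp C m f t : cube_param C m f -> hamming_iso m t ->
  cube_param C m (fun l => f (t l)).
Proof.
  intros [F1 [F2 [Fi Fa]]] [Tl [Th Ts]]. split; [|split; [|split]].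
  - intros l Hl. apply F1; auto.
  - intros v Hv. destruct (F2 v Hv) as [w [Hw <-]]. destruct (Ts w Hw) as [l [Hl <-]]. eauto.
  - intros l l' Hl Hl' Eq. apply Fi in Eq; auto. apply hamming_eq0; [lia|].
    rewrite <- Th, Eq by auto. apply hamming_refl.
  - intros l l' Hl Hl'. rewrite Fa, Th; auto; tauto.
Qed.

(* The [f]-coordinates of [g l], chosen by [epsilon]: meaningful only when [g l] lies in the
   cube parametrised by [f]. *)
Definition transition (m : nat) (f g : list bool -> V) (l : list bool) : list bool :=
  epsilon (inhabits nil) (fun v => length v = m /\ f v = g l).

Section Transition.

Variables (C D : V -> Prop) (n m : nat) (f g : list bool -> V).
Hypotheses (Hg : cube_param C n g) (Hf : cube_param D m f) (CD : forall v, C v -> D v).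

Lemma transition_spec l : length l = n ->
  length (transition m f g l) = m /\ f (transition m f g l) = g l.
Proof.
  intros Hl. unfold transition. apply epsilon_spec.
  apply Hf, CD, Hg; auto.
Qed.

Lemma transition_embedding : cube_embedding n m (transition m f g).
Proof.
  pose proof Hg as [_ [_ [Gi Ga]]]. pose proof Hf as [_ [_ [_ Fa]]].
  split; [|split].
  - intros l Hl. apply transition_spec; auto.
  - intros l l' Hl Hl' Eq. apply Gi; auto.
    destruct (transition_spec l Hl) as [_ <-], (transition_spec l' Hl') as [_ <-].
    rewrite Eq; auto.
  - intros l l' Hl Hl'.
    destruct (transition_spec l Hl) as [L1 E1], (transition_spec l' Hl') as [L2 E2].
    rewrite <- Fa, E1, E2, Ga by auto. tauto.
Qed.

End Transition.

Lemma is_cube_dim_le C D n m : is_cube E C n -> is_cube E D m -> (forall v, C v -> D v) ->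
  n <= m.
Proof.
  intros [g Hg] [f Hf] CD. eapply cube_embedding_dim_le, transition_embedding; eauto.
Qed.

Lemma is_cube_dim_unique C n m : is_cube E C n -> is_cube E C m -> n = m.
Proof.
  intros H1 H2. pose proof (is_cube_dim_le C C n m H1 H2 (fun v h => h)).
  pose proof (is_cube_dim_le C C m n H2 H1 (fun v h => h)). lia.
Qed.

Lemma is_cube_facet C D n f : is_cube E C n -> cube_param D (S n) f ->
  (forall v, C v -> D v) ->
  exists i b, i < S n /\ forall v, length v = S n -> (C (f v) <-> nth i v false = b).
Proof.
  intros [g Hg] Hf CD. pose proof Hg as [G1 [G2 _]]. pose proof Hf as [_ [_ [Fi _]]].
  destruct (cube_embedding_facet n _ (transition_embedding C D n (S n) f g Hg Hf CD))
    as [i [b [Hi Hv]]].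
  exists i, b. split; auto. intros v Hvl. rewrite <- Hv by auto. split.
  - intros Cv. destruct (G2 _ Cv) as [l [Hl El]]. exists l. split; auto.
    destruct (transition_spec C D n (S n) f g Hg Hf CD l Hl) as [L1 E1].
    apply Fi; auto. congruence.
  - intros [l [Hl <-]]. destruct (transition_spec C D n (S n) f g Hg Hf CD l Hl) as [_ ->].
    auto.
Qed.

Lemma facet_normal_form C D n f : is_cube E C n -> cube_param D (S n) f ->
  (forall v, C v -> D v) ->
  exists t, hamming_iso (S n) t /\
    forall c l, length l = n -> (C (f (t (c :: l))) <-> c = false).
Proof.
  intros HC Hf CD. destruct (is_cube_facet C D n f HC Hf CD) as [i [b [Hi Hv]]].
  exists (move_head i b). split; [apply move_head_iso; auto|].
  intros c l Hl. rewrite Hv.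
  - rewrite nth_move_head by lia. destruct c, b; simpl; split; congruence.
  - apply move_head_iso; simpl; auto.
Qed.

Lemma cube_fourth_corner D m f z u w : cube_param D m f -> D z -> D u -> D w ->
  E z u -> E z w -> u <> w -> exists b, D b /\ E b u /\ E b w /\ b <> z.
Proof.
  intros Hf Dz Du Dw Ezu Ezw Huw. pose proof Hf as [F1 [F2 [Fi Fa]]].
  destruct (F2 z Dz) as [mz [Hmz <-]], (F2 u Du) as [mu [Hmu <-]], (F2 w Dw) as [mw [Hmw <-]].
  rewrite Fa in Ezu, Ezw by auto.
  apply hamming_eq1 in Ezu as [s [Hs ->]], Ezw as [t [Ht ->]]; try lia.
  assert (Hst : s <> t) by (intros ->; auto).
  assert (Hb : length (flip s (flip t mz)) = m) by (rewrite !length_flip; auto).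
  exists (f (flip s (flip t mz))). repeat split.
  - apply F1; auto.
  - apply Fa; auto. apply hamming_flip_flip_r; lia.
  - apply Fa; auto. rewrite flip_comm. apply hamming_flip_flip_r; lia.
  - intros Eq. apply Fi in Eq; auto. revert Eq. apply flip_flip_neq; lia.
Qed.

End Cubes.

Section Subdivision.

Context {V : Type} (E : V -> V -> Prop).

Definition facet_of (C D : V -> Prop) : Prop :=
  exists n, is_cube E C n /\ is_cube E D (S n) /\ (forall v, C v -> D v).

Lemma subdiv_adjE C D : subdiv_adj E C D <-> facet_of C D \/ facet_of D C.
Proof.
  unfold subdiv_adj, facet_of. split.
  - intros [n [H|H]]; [left|right]; exists n; tauto.
  - intros [[n H]|[n H]]; exists n; tauto.
Qed.

Lemma subdiv_adj_sym C D : subdiv_adj E C D -> subdiv_adj E D C.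
Proof. rewrite !subdiv_adjE. tauto. Qed.

Lemma facet_of_normal_form C D : facet_of C D ->
  exists n f, is_cube E C n /\ cube_param E D (S n) f /\ (forall v, C v -> D v) /\
    forall c l, length l = n -> (C (f (c :: l)) <-> c = false).
Proof.
  intros [n [HC [[f Hf] CD]]].
  destruct (facet_normal_form E C D n f HC Hf CD) as [t [Ht Hc]].
  exists n, (fun l => f (t l)). auto using cube_param_comp.
Qed.

Lemma cube_param_facet C D n f : cube_param E D (S n) f -> (forall v, C v -> D v) ->
  (forall c l, length l = n -> (C (f (c :: l)) <-> c = false)) ->
  cube_param E C n (fun l => f (false :: l)).
Proof.
  intros [F1 [F2 [Fi Fa]]] CD Hc. split; [|split; [|split]].
  - intros l Hl. apply Hc; auto.
  - intros v Cv. destruct (F2 v (CD v Cv)) as [[|c l] [Hw <-]]; simpl in Hw; try discriminate.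
    injection Hw as Hw. apply Hc in Cv; auto. subst. eauto.
  - intros l l' Hl Hl' Eq. apply Fi in Eq; simpl; auto. injection Eq; auto.
  - intros l l' Hl Hl'. rewrite Fa; simpl; auto. simpl; tauto.
Qed.

(* The edges of X crossed by the edge C -- D of the subdivision: the edges of the bigger cube
   leaving the smaller one, oriented away from it. *)
Definition dual_edge (C D : V -> Prop) (x y : V) : Prop :=
  E x y /\ ((C x /\ D y /\ ~ C y) \/ (D x /\ C y /\ ~ D y)).

Lemma dual_edge_sym C D x y : dual_edge C D x y <-> dual_edge D C x y.
Proof. unfold dual_edge. tauto. Qed.

Lemma dual_edge_normal_form C D n f : cube_param E D (S n) f -> (forall v, C v -> D v) ->
  (forall c l, length l = n -> (C (f (c :: l)) <-> c = false)) ->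
  forall x y, dual_edge C D x y <->
    exists l, length l = n /\ x = f (false :: l) /\ y = f (true :: l).
Proof.
  intros Hf CD Hc x y. pose proof Hf as [F1 [F2 [Fi Fa]]]. split.
  - intros [Exy [[Cx [Dy NCy]]|[Dx [Cy NDy]]]]; [|exfalso; auto].
    destruct (F2 x (CD x Cx)) as [[|c l] [Hw <-]]; simpl in Hw; try discriminate.
    destruct (F2 y Dy) as [[|c' l'] [Hw' <-]]; simpl in Hw'; try discriminate.
    injection Hw as Hw. injection Hw' as Hw'.
    apply Hc in Cx; auto. subst c.
    assert (c' = true) by (destruct c'; auto; exfalso; apply NCy, Hc; auto). subst c'.
    rewrite Fa in Exy by (simpl; auto). simpl in Exy.
    assert (l = l') by (apply hamming_eq0; lia). subst. eauto.
  - intros [l [Hl [-> ->]]]. split.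
    + rewrite Fa by (simpl; auto). simpl. rewrite hamming_refl. auto.
    + left. split; [apply Hc; auto|split; [apply F1; simpl; auto|]].
      rewrite Hc by auto. discriminate.
Qed.

Definition parallel : relation (V * V) :=
  clos_refl_sym_trans (V * V) (fun e f => square_opp E (fst e) (snd e) (fst f) (snd f)).

Lemma parallel_same_hyperplane e f : parallel e f -> same_hyperplane E e f.
Proof.
  induction 1.
  - apply rst_step. left. auto.
  - apply rst_refl.
  - apply rst_sym; auto.
  - eapply rst_trans; eauto.
Qed.

(* Changing the coordinates of [l] into those of [m] one at a time, consecutive edges are
   opposite in a square. *)
Lemma cube_map_edges_parallel k g : cube_map E (S k) g ->
  forall l m, length l = k -> length m = k ->
  parallel (g (false :: l), g (true :: l)) (g (false :: m), g (true :: m)).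
Proof.
  revert g; induction k as [|k IH]; intros g [Gi Ga] l m Hl Hm.
  { destruct l, m; simpl in *; try discriminate. apply rst_refl. }
  destruct l as [|a l], m as [|b m]; simpl in *; try discriminate.
  injection Hl as Hl. injection Hm as Hm.
  apply rst_trans with (g (false :: b :: l), g (true :: b :: l)).
  - destruct (Bool.bool_dec a b) as [->|Hab]; [apply rst_refl|].
    apply rst_step. simpl. repeat split.
    1-4: rewrite Ga by (simpl; auto); simpl; rewrite hamming_refl; destruct a, b; simpl; congruence.
    all: intros Eq; apply Gi in Eq; simpl; auto; discriminate.
  - apply (IH (fun l => g (ins 1 b l))); auto. apply cube_map_ins. split; auto.
Qed.

Lemma dual_edges_parallel C D x y x' y' : subdiv_adj E C D ->
  dual_edge C D x y -> dual_edge C D x' y' -> parallel (x, y) (x', y').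
Proof.
  enough (Hfacet : forall C D, facet_of C D ->
    dual_edge C D x y -> dual_edge C D x' y' -> parallel (x, y) (x', y')).
  { intros HCD H1 H2. apply subdiv_adjE in HCD as [H|H]; [exact (Hfacet C D H H1 H2)|].
    apply dual_edge_sym in H1, H2. exact (Hfacet D C H H1 H2). }
  clear C D. intros C D HCD H1 H2.
  destruct (facet_of_normal_form C D HCD) as [n [f [_ [Hf [CD Hc]]]]].
  rewrite (dual_edge_normal_form C D n f Hf CD Hc) in H1, H2.
  destruct H1 as [l [Hl [-> ->]]], H2 as [l' [Hl' [-> ->]]].
  apply (cube_map_edges_parallel n f); auto. apply Hf.
Qed.

Lemma dual_edge_exists C D : subdiv_adj E C D -> exists x y, dual_edge C D x y.
Proof.
  enough (Hfacet : forall C D, facet_of C D -> exists x y, dual_edge C D x y).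
  { rewrite subdiv_adjE. intros [H|H]; [auto|].
    destruct (Hfacet D C H) as [x [y Hxy]]. exists x, y. apply dual_edge_sym; auto. }
  clear C D. intros C D HCD.
  destruct (facet_of_normal_form C D HCD) as [n [f [_ [Hf [CD Hc]]]]].
  exists (f (false :: repeat false n)), (f (true :: repeat false n)).
  apply (dual_edge_normal_form C D n f Hf CD Hc). exists (repeat false n).
  split; auto. apply repeat_length.
Qed.

Lemma flag_normal_form B M T : facet_of B M -> facet_of M T ->
  exists k f, is_cube E T (S (S k)) /\ cube_param E T (S (S k)) f /\ (forall v, B v -> M v) /\
    (forall c l, length l = S k -> (M (f (c :: l)) <-> c = false)) /\
    (forall c l, length l = k -> (B (f (false :: c :: l)) <-> c = false)).
Proof.
  intros [k [HB [HM' BM]]] HMT.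
  destruct (facet_of_normal_form M T HMT) as [m [f [HM [Hf [MT Hc]]]]].
  rewrite <- (is_cube_dim_unique E M _ _ HM' HM) in *.
  destruct (facet_normal_form E B M k _ HB (cube_param_facet M T (S k) f Hf MT Hc) BM)
    as [t [Ht HcB]].
  assert (Ht' := lift_head_iso _ _ Ht).
  exists k, (fun l => f (lift_head t l)).
  split; [exists (fun l => f (lift_head t l))|split]; try apply cube_param_comp; auto.
  split; auto. split.
  - intros c l Hl. apply Hc. apply Ht; auto.
  - intros c l Hl. apply HcB; auto.
Qed.

(* A square B -- M1 -- T -- M2 of the subdivision with smallest cube B and biggest cube T. *)
Lemma diamond_dual_edge B M1 M2 T :
  facet_of B M1 -> facet_of M1 T -> facet_of B M2 -> facet_of M2 T -> M1 <> M2 ->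
  exists x y, dual_edge B M1 x y /\ dual_edge M2 T x y.
Proof.
  intros HBM1 HM1T [_ [_ [_ BM2]]] [j [HM2 [HT M2T]]] Hne.
  pose proof HM1T as [_ [_ [_ M1T]]].
  destruct (flag_normal_form B M1 T HBM1 HM1T) as [k [f [HT' [Hf [BM1 [HcM HcB]]]]]].
  assert (j = S k) by (pose proof (is_cube_dim_unique E T _ _ HT HT'); lia). subst j.
  destruct (is_cube_facet E M2 T (S k) f HM2 Hf M2T) as [i [b [Hi HcM2]]].
  pose proof Hf as [F1 [F2 [_ Fa]]].
  assert (HBi : forall l, length l = k -> nth i (false :: false :: l) false = b).
  { intros l Hl. apply HcM2; simpl; auto. apply BM2, HcB; auto. }
  pose (l0 := repeat false k). assert (Hl0 : length l0 = k) by apply repeat_length.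
  destruct i as [|[|i]].
  - exfalso. apply Hne, pred_ext. specialize (HBi l0 Hl0). simpl in HBi. subst b.
    intros v. split; intros Hv.
    + destruct (F2 v (M1T v Hv)) as [[|c l] [Hl <-]]; simpl in Hl; try discriminate.
      apply HcM2; simpl; auto. apply HcM in Hv; auto.
    + destruct (F2 v (M2T v Hv)) as [[|c l] [Hl <-]]; simpl in Hl; try discriminate.
      apply HcM2 in Hv; simpl; auto. apply HcM; auto.
  - specialize (HBi l0 Hl0). simpl in HBi. subst b.
    exists (f (false :: false :: l0)), (f (false :: true :: l0)).
    assert (Exy : E (f (false :: false :: l0)) (f (false :: true :: l0)))
      by (rewrite Fa by (simpl; auto); simpl; rewrite hamming_refl; auto).
    split; split; auto; left.
    + split; [apply HcB; auto|split; [apply HcM; simpl; auto|]].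
      rewrite HcB by auto. discriminate.
    + split; [apply HcM2; simpl; auto|split; [apply F1; simpl; auto|]].
      rewrite HcM2 by (simpl; auto). discriminate.
  - exfalso. simpl in Hi.
    pose proof (HBi l0 Hl0) as H1. pose proof (HBi (flip i l0)) as H2.
    rewrite length_flip in H2. specialize (H2 Hl0). simpl in H1, H2.
    rewrite nth_flip_eq, H1 in H2 by lia. destruct b; discriminate.
Qed.

Lemma interval_adj x y m : E x y -> in_interval E x y m -> m = x \/ m = y.
Proof.
  intros Hxy [p [q [[Hp Hmin] Hpm]]].
  assert (length (p ++ q) <= 1) by (apply (Hmin [y]); simpl; auto).
  destruct p as [|z [|z' p]]; simpl in *; auto; try lia.
  destruct Hpm as [_ ->]. destruct q; simpl in *; [|lia]. destruct Hp as [_ ->]; auto.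
Qed.

Hypothesis E_median : median_graph E.

Lemma median_sym x y : E x y -> E y x.
Proof. apply E_median. Qed.

Lemma median_neq x y : E x y -> x <> y.
Proof. intros Hxy ->. eapply E_median; eauto. Qed.

Lemma median_triangle_free a b d : E a b -> E b d -> ~ E a d.
Proof.
  intros Hab Hbd Had. destruct E_median as [_ [_ [_ Hmed]]].
  destruct (Hmed a b d) as [m [[H1 [H2 H3]] _]].
  apply interval_adj in H1, H2, H3; auto.
  pose proof (median_neq a b Hab). pose proof (median_neq b d Hbd).
  pose proof (median_neq a d Had).
  destruct H1 as [->| ->]; destruct H2; destruct H3; congruence.
Qed.

Lemma interval_two_path x u y : E x u -> E u y -> x <> y -> in_interval E x y u.
Proof.
  intros Hxu Huy Hxy. exists [u], [y]. split; [split|].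
  - simpl; auto.
  - intros [|z [|z' q]] Hq; simpl in *; try lia.
    + congruence.
    + destruct Hq as [Hxz ->]. exfalso. apply (median_triangle_free x u y); auto.
  - simpl; auto.
Qed.

(* Two common neighbours of three distinct vertices would both be their median. *)
Lemma median_K23_free u w x1 x2 x3 : u <> w -> x1 <> x2 -> x1 <> x3 -> x2 <> x3 ->
  E x1 u -> E x2 u -> E x3 u -> E x1 w -> E x2 w -> E x3 w -> False.
Proof.
  intros Huw H12 H13 H23 A1 A2 A3 B1 B2 B3. destruct E_median as [Hsym [_ [_ Hmed]]].
  destruct (Hmed x1 x2 x3) as [m [_ Huniq]].
  assert (u = m) by (apply Huniq; apply interval_two_path; auto).
  assert (w = m) by (apply Huniq; apply interval_two_path; auto).
  congruence.
Qed.

Lemma cube_square_corner m D z u w v : is_cube E D m -> D z -> D u -> D w ->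
  u <> w -> z <> v -> E z u -> E z w -> E v u -> E v w -> D v.
Proof.
  intros [f Hf] Dz Du Dw Huw Hzv Ezu Ezw Evu Evw.
  destruct (cube_fourth_corner E D m f z u w Hf Dz Du Dw Ezu Ezw Huw)
    as [b [Db [Ebu [Ebw Hbz]]]].
  destruct (classic (v = b)) as [->|Hvb]; auto. exfalso.
  apply (median_K23_free u w z v b); auto.
Qed.

Lemma common_cofacet_incl A B C D : facet_of A B -> facet_of C B ->
  facet_of A D -> facet_of C D -> A <> C -> forall v, B v -> D v.
Proof.
  intros [n [HA [HB AB]]] [n' [HC [HB' CB]]] [_ [_ [_ AD]]] [nD [_ [[fD HfD] CD]]] HAC.
  assert (n' = n) by (pose proof (is_cube_dim_unique E B _ _ HB HB'); lia). subst n'.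
  destruct HB as [fB HfB]. pose proof HfB as [B1 [B2 [Bi Ba]]].
  destruct (is_cube_facet E A B n fB HA HfB AB) as [iA [al [HiA FA]]].
  destruct (is_cube_facet E C B n fB HC HfB CB) as [iC [ga [HiC FC]]].
  intros v Bv. destruct (B2 v Bv) as [l [Hl <-]].
  destruct (classic (A (fB l))) as [Al|NAl]; [auto|].
  destruct (classic (C (fB l))) as [Cl|NCl]; [auto|].
  rewrite FA in NAl by auto. rewrite FC in NCl by auto.
  destruct (Nat.eq_dec iA iC) as [<-|Hne].
  { exfalso. destruct (Bool.bool_dec al ga) as [<-|];
      [|destruct (nth iA l false), al, ga; congruence].
    apply HAC, pred_ext. intros u. split; intros Hu.
    - destruct (B2 u (AB u Hu)) as [w [Hw <-]]. rewrite FC, <- FA; auto.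
    - destruct (B2 u (CB u Hu)) as [w [Hw <-]]. rewrite FA, <- FC; auto. }
  (* [fB l] is the corner outside A and C of a square of B whose other corners lie in D. *)
  pose (lz := flip iA (flip iC l)).
  assert (Hlz : length lz = S n) by (unfold lz; rewrite !length_flip; auto).
  assert (Hla : length (flip iA l) = S n) by (rewrite length_flip; auto).
  assert (Hlc : length (flip iC l) = S n) by (rewrite length_flip; auto).
  assert (Au : A (fB (flip iA l))).
  { rewrite FA, nth_flip_eq by lia. destruct (nth iA l false), al; simpl; congruence. }
  assert (Cw : C (fB (flip iC l))).
  { rewrite FC, nth_flip_eq by lia. destruct (nth iC l false), ga; simpl; congruence. }
  assert (Az : A (fB lz)).
  { rewrite FA by auto. unfold lz. rewrite nth_flip_eq, nth_flip_neq by (rewrite ?length_flip; lia).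
    destruct (nth iA l false), al; simpl; congruence. }
  assert (Huw : fB (flip iA l) <> fB (flip iC l)).
  { intros Eq. apply Bi in Eq; auto. apply flip_inj in Eq; lia. }
  assert (Ezu : E (fB lz) (fB (flip iA l))) by (apply Ba; auto; apply hamming_flip_flip_r; lia).
  assert (Ezw : E (fB lz) (fB (flip iC l))).
  { apply Ba; auto. unfold lz. rewrite flip_comm. apply hamming_flip_flip_r; lia. }
  apply (cube_square_corner (S nD) D (fB lz) (fB (flip iA l)) (fB (flip iC l)));
    auto; [exists fD; exact HfD| | |].
  - intros Eq. apply Bi in Eq; auto. revert Eq. apply flip_flip_neq; lia.
  - apply Ba; auto. apply hamming_flip; lia.
  - apply Ba; auto. apply hamming_flip; lia.
Qed.

Lemma common_cofacet_unique A B C D : facet_of A B -> facet_of C B ->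
  facet_of A D -> facet_of C D -> A <> C -> B = D.
Proof.
  intros HAB HCB HAD HCD HAC. apply pred_ext. intros v. split.
  - apply (common_cofacet_incl A B C D); auto.
  - apply (common_cofacet_incl A D C B); auto.
Qed.

Ltac facet_dims_absurd :=
  repeat match goal with H : facet_of _ _ |- _ => destruct H as [? [? [? _]]] end;
  repeat match goal with
  | H1 : is_cube E ?C ?n, H2 : is_cube E ?C ?m |- _ =>
      pose proof (is_cube_dim_unique E C n m H1 H2); clear H2
  end; lia.

(* The cubes around a square of the subdivision form either a diamond (one smallest, one
   biggest cube) or two cubes with two common cofacets, which is impossible; any other
   orientation is ruled out by dimensions. *)
Lemma subdiv_square_dual_edge a b c d : square_opp (subdiv_adj E) a b c d ->
  exists x y, dual_edge a b x y /\ dual_edge c d x y.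
Proof.
  intros [Hab [Hcd [Hac [Hbd [Had Hbc]]]]].
  assert (Hda : d <> a) by auto. assert (Hcb : c <> b) by auto.
  rewrite subdiv_adjE in Hab, Hcd, Hac, Hbd.
  destruct Hab as [Hab|Hab], Hcd as [Hcd|Hcd], Hac as [Hac|Hac], Hbd as [Hbd|Hbd].
  all: first
    [ solve [apply (diamond_dual_edge a b c d); auto]
    | solve [destruct (diamond_dual_edge c d a b) as [x [y [H1 H2]]]; eauto]
    | solve [destruct (diamond_dual_edge d c b a) as [x [y [H1 H2]]]; auto;
             exists x, y; rewrite dual_edge_sym in H1; rewrite dual_edge_sym in H2; auto]
    | solve [destruct (diamond_dual_edge b a d c) as [x [y [H1 H2]]]; auto;
             exists x, y; rewrite dual_edge_sym in H1; rewrite dual_edge_sym in H2; auto]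
    | solve [exfalso; apply Hbc, (common_cofacet_unique a b d c); auto]
    | solve [exfalso; apply Had, (common_cofacet_unique b a c d); auto]
    | exfalso; facet_dims_absurd ].
Qed.

Definition dual_parallel (e f : (V -> Prop) * (V -> Prop)) : Prop :=
  forall x y x' y', dual_edge (fst e) (snd e) x y -> dual_edge (fst f) (snd f) x' y' ->
    parallel (x, y) (x', y').

Lemma subdiv_hyperplane_dual_parallel e f : same_hyperplane (subdiv_adj E) e f ->
  e = f \/ (subdiv_adj E (fst e) (snd e) /\ subdiv_adj E (fst f) (snd f) /\ dual_parallel e f).
Proof.
  induction 1 as [e f H| e | e f _ IH | e f g _ IH1 _ IH2].
  - right. destruct H as [Hsq|[Ha [E1 E2]]].
    + pose proof Hsq as [H1 [H2 _]]. split; auto. split; auto.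
      destruct (subdiv_square_dual_edge _ _ _ _ Hsq) as [x0 [y0 [I1 I2]]].
      intros x y x' y' Ix Iy.
      apply rst_trans with (x0, y0);
        [apply (dual_edges_parallel (fst e) (snd e))|apply (dual_edges_parallel (fst f) (snd f))];
        auto.
    + destruct e as [C D], f as [C' D']; simpl in *; subst.
      split; auto. split; [apply subdiv_adj_sym; auto|].
      intros x y x' y' Ix Iy. simpl in *. rewrite dual_edge_sym in Iy.
      eapply dual_edges_parallel; eauto.
  - left; auto.
  - destruct IH as [->|[H1 [H2 H3]]]; [left; auto|right]. split; auto. split; auto.
    intros x y x' y' Ix Iy. apply rst_sym. apply H3; auto.
  - destruct IH1 as [->|[H1 [H2 H3]]]; auto.
    destruct IH2 as [<-|[H4 [H5 H6]]]; right; auto.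
    split; auto. split; auto.
    destruct (dual_edge_exists _ _ H2) as [x0 [y0 I0]].
    intros x y x' y' Ix Iy. eapply rst_trans; [apply (H3 x y x0 y0)|apply (H6 x0 y0 x' y')]; auto.
Qed.

Definition single (a : V) : V -> Prop := fun v => v = a.
Definition pair (a b : V) : V -> Prop := fun v => v = a \/ v = b.
Definition square (a b c d : V) : V -> Prop := fun v => v = a \/ v = b \/ v = c \/ v = d.
Definition basic_edge (e : V * V) : (V -> Prop) * (V -> Prop) :=
  (single (fst e), pair (fst e) (snd e)).

Lemma is_cube_single a : is_cube E (single a) 0.
Proof.
  exists (fun _ => a). split; [|split; [|split]].
  - reflexivity.
  - intros v ->. exists []. auto.
  - intros [|] [|] H1 H2 _; simpl in *; auto; discriminate.
  - intros [|] [|] H1 H2; simpl in *; try discriminate.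
    split; [intros h; exfalso; eapply median_neq; eauto|discriminate].
Qed.

Lemma is_cube_pair a b : E a b -> is_cube E (pair a b) 1.
Proof.
  intros Hab. pose proof (median_neq a b Hab).
  exists (fun l => if hd false l then b else a). split; [|split; [|split]].
  - intros l _. destruct (hd false l); [right|left]; reflexivity.
  - intros v [-> | ->]; [exists [false]|exists [true]]; auto.
  - intros [|c [|]] [|c' [|]] H1 H2; simpl in *; try discriminate.
    destruct c, c'; auto; intros; congruence.
  - intros [|c [|]] [|c' [|]] H1 H2; simpl in *; try discriminate.
    destruct c, c'; simpl; split; intros; auto using median_sym; try discriminate;
      exfalso; eapply median_neq; eauto.
Qed.

Lemma is_cube_square a b c d : square_opp E a b c d -> is_cube E (square a b c d) 2.
Proof.
  intros [Hab [Hcd [Hac [Hbd [Had Hbc]]]]].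
  assert (Nad : ~ E a d) by (apply (median_triangle_free a b d); auto).
  assert (Nbc : ~ E b c) by (apply (median_triangle_free b a c); auto using median_sym).
  pose proof (median_neq a b Hab). pose proof (median_neq a c Hac).
  pose proof (median_neq b d Hbd). pose proof (median_neq c d Hcd).
  exists (fun l : list bool => match l with
                | x :: y :: _ => if x then (if y then d else b) else (if y then c else a)
                | _ => a end).
  split; [|split; [|split]].
  - intros [|x [|y [|]]] Hl; simpl in *; try discriminate. unfold square. destruct x, y; tauto.
  - intros v [-> | [-> | [-> | ->]]];
      [exists [false;false]|exists [true;false]|exists [false;true]|exists [true;true]]; auto.
  - intros [|x [|y [|]]] [|x' [|y' [|]]] L1 L2; simpl in *; try discriminate.
    destruct x, y, x', y'; auto; intros; try congruence; exfalso; auto.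
  - intros [|x [|y [|]]] [|x' [|y' [|]]] L1 L2; simpl in *; try discriminate.
    destruct x, y, x', y'; simpl; split; intros; auto using median_sym; try discriminate;
      exfalso; try (eapply median_neq; eauto; fail); eauto using median_sym.
Qed.

Lemma dual_edge_basic a b x y : E a b ->
  dual_edge (single a) (pair a b) x y <-> x = a /\ y = b.
Proof.
  intros Hab. pose proof (median_neq a b Hab). unfold dual_edge, single, pair. split.
  - intros [Exy [[-> [[-> | ->] Ny]]|[_ [-> Ny]]]]; try tauto; exfalso; apply Ny; auto.
  - intros [-> ->]. split; auto.
Qed.

Lemma subdiv_hyperplane_basic_parallel e f : E (fst e) (snd e) -> E (fst f) (snd f) ->
  same_hyperplane (subdiv_adj E) (basic_edge e) (basic_edge f) -> parallel e f.
Proof.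
  destruct e as [a b], f as [a' b']. simpl. intros Hab Hab' H.
  destruct (subdiv_hyperplane_dual_parallel _ _ H) as [Eq|[_ [_ HR]]].
  - injection Eq as E1 E2.
    assert (a' = a) by (change (single a a'); rewrite E1; reflexivity). subst a'.
    assert (Hb : pair a b b') by (rewrite E2; right; reflexivity).
    destruct Hb as [-> | ->]; [exfalso; eapply median_neq; eauto|apply rst_refl].
  - apply HR; simpl; apply dual_edge_basic; auto.
Qed.

Lemma facet_single_pair a b : E a b -> facet_of (single a) (pair a b).
Proof.
  intros Hab. exists 0. split; [apply is_cube_single|split; [apply is_cube_pair; auto|]].
  intros v ->; left; reflexivity.
Qed.

Lemma facet_single_pair_r a b : E a b -> facet_of (single b) (pair a b).
Proof.
  intros Hab. exists 0. split; [apply is_cube_single|split; [apply is_cube_pair; auto|]].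
  intros v ->; right; reflexivity.
Qed.

Lemma facet_pair_square a b c d x y : square_opp E a b c d -> E x y ->
  (forall v, pair x y v -> square a b c d v) -> facet_of (pair x y) (square a b c d).
Proof.
  intros Hsq Hxy Hsub. exists 1. split; [apply is_cube_pair; auto|split; auto].
  apply is_cube_square; auto.
Qed.

(* Both edges are opposite to the edge from [pair a c] to [square a b c d] in a square of the
   subdivision. *)
Lemma square_subdiv_same_hyperplane a b c d : square_opp E a b c d ->
  same_hyperplane (subdiv_adj E) (basic_edge (a, b)) (basic_edge (c, d)).
Proof.
  intros Hsq. pose proof Hsq as [Hab [Hcd [Hac [Hbd [Had Hbc]]]]]. simpl.
  pose proof (median_neq a b Hab). pose proof (median_neq c d Hcd).
  pose proof (median_neq a c Hac).
  apply rst_trans with (pair a c, square a b c d); [|apply rst_sym]; apply rst_step; left;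
    simpl; repeat split.
  all: try (apply subdiv_adjE; left).
  all: try (apply facet_single_pair; auto; fail).
  all: try (apply facet_single_pair_r; auto; fail).
  all: try (apply facet_pair_square; auto; unfold pair, square; intros v [-> | ->]; tauto).
  all: intros Eq.
  - assert (Hb : square a b c d b) by (unfold square; tauto). rewrite <- Eq in Hb.
    unfold single in Hb. congruence.
  - assert (Hb : pair a b b) by (right; reflexivity). rewrite Eq in Hb. destruct Hb; auto.
  - assert (Ha : square a b c d a) by (unfold square; tauto). rewrite <- Eq in Ha.
    unfold single in Ha. congruence.
  - assert (Hd : pair c d d) by (right; reflexivity). rewrite Eq in Hd. destruct Hd; auto.
Qed.

Lemma parallel_subdiv_same_hyperplane e f : parallel e f ->
  same_hyperplane (subdiv_adj E) (basic_edge e) (basic_edge f).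
Proof.
  induction 1 as [[a b] [c d] H| e | e f _ IH | e f g _ IH1 _ IH2].
  - apply square_subdiv_same_hyperplane; auto.
  - apply rst_refl.
  - apply rst_sym; auto.
  - eapply rst_trans; eauto.
Qed.

Lemma edge_facet_basic C D : is_cube E C 0 -> is_cube E D 1 -> (forall v, C v -> D v) ->
  exists x y, E x y /\ (C, D) = basic_edge (x, y).
Proof.
  intros HC HD CD.
  destruct (facet_of_normal_form C D (ex_intro _ _ (conj HC (conj HD CD))))
    as [m [f [HC' [Hf [_ Hc]]]]].
  rewrite <- (is_cube_dim_unique E C _ _ HC HC') in *. pose proof Hf as [F1 [F2 [_ Fa]]].
  exists (f [false]), (f [true]). split; [apply Fa; simpl; auto|].
  unfold basic_edge; simpl. f_equal; apply pred_ext; intros v; split.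
  - intros Cv. destruct (F2 v (CD v Cv)) as [[|c [|]] [Hw <-]]; simpl in Hw; try discriminate.
    apply Hc in Cv; auto. subst; reflexivity.
  - intros ->. apply Hc; auto.
  - intros Dv. destruct (F2 v Dv) as [[|[|] [|]] [Hw <-]]; simpl in Hw; try discriminate;
      [right|left]; reflexivity.
  - intros [-> | ->]; apply F1; auto.
Qed.

(* Induction on the dimension: C -- D is opposite to C' -- D' in a square of the subdivision,
   where C' and D' are the faces of C and D on which the second coordinate vanishes. *)
Lemma facet_subdiv_same_hyperplane_basic n : forall C D,
  is_cube E C n -> is_cube E D (S n) -> (forall v, C v -> D v) ->
  exists x y, E x y /\ same_hyperplane (subdiv_adj E) (C, D) (basic_edge (x, y)).
Proof.
  induction n as [|n IH]; intros C D HC HD CD.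
  { destruct (edge_facet_basic C D HC HD CD) as [x [y [Exy ->]]].
    exists x, y. split; auto. apply rst_refl. }
  destruct (facet_of_normal_form C D (ex_intro _ _ (conj HC (conj HD CD))))
    as [m [f [HC' [Hf [_ Hc]]]]].
  rewrite <- (is_cube_dim_unique E C _ _ HC HC') in *. pose proof Hf as [F1 [F2 [Fi Fa]]].
  set (C' := in_image n (fun l => f (false :: false :: l))).
  set (D' := in_image (S n) (fun l => f (ins 1 false l))).
  assert (HC1 : is_cube E C' n).
  { apply is_cube_image, (cube_map_ins E n (fun l => f (false :: l)) 0).
    apply (cube_map_ins E (S n) f 0 false), Hf. }
  assert (HD1 : is_cube E D' (S n))
    by (apply is_cube_image, (cube_map_ins E (S n) f 1 false), Hf).
  assert (C'D' : forall v, C' v -> D' v)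
    by (intros v [l [Hl <-]]; exists (false :: l); simpl; auto).
  assert (C'C : forall v, C' v -> C v) by (intros v [l [Hl <-]]; apply Hc; simpl; auto).
  assert (D'D : forall v, D' v -> D v)
    by (intros v [l [Hl <-]]; apply F1; rewrite length_ins; auto).
  destruct (IH C' D' HC1 HD1 C'D') as [x [y [Exy Hxy]]].
  exists x, y. split; auto. apply rst_trans with (C', D'); auto.
  pose (l0 := repeat false n). assert (Hl0 : length l0 = n) by apply repeat_length.
  apply rst_step. left. simpl. repeat split; try apply subdiv_adjE.
  + left. exists (S n). auto.
  + left. exists n. auto.
  + right. exists n. auto.
  + right. exists (S n). auto.
  + intros Eq. assert (Hv : C (f (false :: true :: l0))) by (apply Hc; simpl; auto).
    rewrite Eq in Hv. destruct Hv as [[|c l] [Hl Hv]]; simpl in Hl; try discriminate.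
    apply Fi in Hv; simpl; auto. discriminate.
  + intros Eq. assert (Hv : D (f (true :: false :: l0))) by (apply F1; simpl; auto).
    rewrite Eq in Hv. apply C'C, Hc in Hv; simpl; auto. discriminate.
Qed.

Lemma subdiv_adj_same_hyperplane_basic C D : subdiv_adj E C D ->
  exists x y, E x y /\ same_hyperplane (subdiv_adj E) (C, D) (basic_edge (x, y)).
Proof.
  intros HCD. pose proof HCD as [[n [HC [HD CD]]]|[n [HD [HC DC]]]]%subdiv_adjE.
  - apply (facet_subdiv_same_hyperplane_basic n); auto.
  - destruct (facet_subdiv_same_hyperplane_basic n D C) as [x [y [Exy Hxy]]]; auto.
    exists x, y. split; auto. eapply rst_trans; [|apply Hxy].
    apply rst_step. right. simpl. auto.
Qed.

Definition rev_edge (e : V * V) : V * V := (snd e, fst e).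

Lemma parallel_rev e f : parallel e f -> parallel (rev_edge e) (rev_edge f).
Proof.
  induction 1 as [e f [H1 [H2 [H3 [H4 [H5 H6]]]]]| e | e f _ IH | e f g _ IH1 _ IH2].
  - apply rst_step. simpl. repeat split; auto using median_sym.
  - apply rst_refl.
  - apply rst_sym; auto.
  - eapply rst_trans; eauto.
Qed.

Lemma same_hyperplane_parallel e f : same_hyperplane E e f ->
  parallel e f \/ parallel e (rev_edge f).
Proof.
  induction 1 as [e f [H|[H1 [H2 H3]]]| e | e f _ IH | e f g _ IH1 _ IH2].
  - left. apply rst_step; auto.
  - right. destruct e, f; unfold rev_edge; simpl in *; subst. apply rst_refl.
  - left; apply rst_refl.
  - destruct IH as [IH|IH]; [left; apply rst_sym; auto|right].
    apply parallel_rev, rst_sym in IH. destruct f; auto.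
  - destruct IH1 as [A1|A1], IH2 as [A2|A2].
    + left; eapply rst_trans; eauto.
    + right; eapply rst_trans; eauto.
    + right. eapply rst_trans; [eauto|]. apply parallel_rev; auto.
    + left. eapply rst_trans; [eauto|]. apply parallel_rev in A2. destruct g; auto.
Qed.

End Subdivision.

Section Paths.

Context {T : Type} (R : T -> T -> Prop).

Lemma is_path_app p q x y z : is_path R x p y -> is_path R y q z -> is_path R x (p ++ q) z.
Proof.
  revert x; induction p; intros x H1 H2; simpl in *; [subst; auto|].
  destruct H1; split; eauto.
Qed.

Lemma is_path_split p x y v : is_path R x p y -> In v (x :: p) ->
  exists p1 p2, is_path R x p1 v /\ is_path R v p2 y /\ length p1 + length p2 = length p.
Proof.
  revert x; induction p as [|z p IH]; intros x H Hin; simpl in *.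
  - destruct Hin as [<-|[]]. exists [], []. simpl; auto.
  - destruct Hin as [<-|Hin].
    + exists [], (z :: p). simpl; auto.
    + destruct H as [Hxz Hp]. destruct (IH z Hp Hin) as [p1 [p2 [H1 [H2 H3]]]].
      exists (z :: p1), p2. simpl. auto.
Qed.

Lemma dist_le_refl x : dist_le R x x 0.
Proof. exists []. simpl; auto. Qed.

Lemma dist_le_trans x y z a b : dist_le R x y a -> dist_le R y z b -> dist_le R x z (a + b).
Proof.
  intros [p [Hp Hl]] [q [Hq Hl']]. exists (p ++ q).
  split; [eapply is_path_app; eauto|rewrite length_app; lia].
Qed.

Lemma dist_le_weaken x y a b : dist_le R x y a -> a <= b -> dist_le R x y b.
Proof. intros [p [Hp Hl]] H. exists p; split; auto; lia. Qed.

Lemma geodesic_exists x y : (exists p, is_path R x p y) -> exists p, geodesic R x p y.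
Proof.
  intros [p0 Hp0].
  destruct (dec_inh_nat_subset_has_unique_least_element
              (fun n => exists p, is_path R x p y /\ length p = n)) as [n [[[p [Hp <-]] Hmin] _]].
  - intros n. apply classic.
  - eauto.
  - exists p. split; auto. intros q Hq. apply Hmin. eauto.
Qed.

Lemma geodesic_length_le x p y c : geodesic R x p y -> dist_le R x y c -> length p <= c.
Proof. intros [_ Hmin] [q [Hq Hl]]. specialize (Hmin q Hq). lia. Qed.

Lemma geodesic_dist_le_end x p y w : geodesic R x p y -> In w (x :: p) ->
  dist_le R w y (length p).
Proof.
  intros [Hp _] Hin. destruct (is_path_split p x y w Hp Hin) as [p1 [p2 [H1 [H2 H3]]]].
  exists p2. split; auto. lia.
Qed.

End Paths.

Lemma gmul_inv_r (G : Group) (x : G) : gmul x (ginv x) = gone.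
Proof.
  rewrite <- (gone_l G (gmul x (ginv x))), <- (ginv_l G (ginv x)) at 1.
  rewrite <- gassoc, (gassoc G (ginv x) x (ginv x)), ginv_l, gone_l. apply ginv_l.
Qed.

Lemma gmul_one_r (G : Group) (x : G) : gmul x gone = x.
Proof. rewrite <- (ginv_l G x), gassoc, gmul_inv_r. apply gone_l. Qed.

Section CayleyGraph.

Context (G : Group) (S : list G).

Lemma cayley_path_translate h p x y : is_path (@cay_adj G S) x p y ->
  is_path (@cay_adj G S) (gmul h x) (map (gmul h) p) (gmul h y).
Proof.
  revert x; induction p as [|z p IH]; intros x H; simpl in *.
  - subst; auto.
  - destruct H as [[s [Hs Hz]] Hp]. split; auto.
    exists s. split; auto. destruct Hz as [-> | ->]; [left|right]; apply gassoc.
Qed.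

Lemma cayley_dist_le_translate h x y n : dist_le (@cay_adj G S) x y n ->
  dist_le (@cay_adj G S) (gmul h x) (gmul h y) n.
Proof.
  intros [p [Hp Hl]]. exists (map (gmul h) p).
  rewrite length_map. auto using cayley_path_translate.
Qed.

Lemma cayley_connected : generates G S -> forall x y : G, exists p, is_path (@cay_adj G S) x p y.
Proof.
  intros Hgen x y. destruct (Hgen (gmul (ginv x) y)) as [p Hp].
  apply (cayley_path_translate x) in Hp.
  rewrite gmul_one_r, gassoc, gmul_inv_r, gone_l in Hp. eauto.
Qed.

Lemma quasiconvex_ext (H K : G -> Prop) : (forall g, H g <-> K g) ->
  quasiconvex_wrt G S H -> quasiconvex_wrt G S K.
Proof.
  intros HK [C HC]. exists C. intros x y p Kx Ky Hp v Hv.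
  destruct (HC x y p (proj2 (HK x) Kx) (proj2 (HK y) Ky) Hp v Hv) as [h [Hh Dh]].
  exists h. split; auto. apply HK; auto.
Qed.

Lemma quasiconvex_sub (H K : G -> Prop) c : (forall g, K g -> H g) ->
  (forall h, H h -> exists k, K k /\ dist_le (@cay_adj G S) h k c) ->
  quasiconvex_wrt G S H -> quasiconvex_wrt G S K.
Proof.
  intros KH Hnear [C HC]. exists (C + c). intros x y p Kx Ky Hp v Hv.
  destruct (HC x y p (KH x Kx) (KH y Ky) Hp v Hv) as [h [Hh Dh]].
  destruct (Hnear h Hh) as [k [Kk Dk]]. exists k. split; auto. eapply dist_le_trans; eauto.
Qed.

(* Through two thin triangles, a geodesic between points of [H] fellow-travels a geodesic
   between nearby points of [K]. *)
Lemma quasiconvex_super (H K : G -> Prop) c : generates G S -> hyperbolic_wrt G S ->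
  (forall g, K g -> H g) ->
  (forall h, H h ->
     exists k, K k /\ dist_le (@cay_adj G S) h k c /\ dist_le (@cay_adj G S) k h c) ->
  quasiconvex_wrt G S K -> quasiconvex_wrt G S H.
Proof.
  intros Hgen [delta Hthin] KH Hnear [C HC]. exists (delta + delta + C + c + c).
  intros x y p Hx Hy Hp v Hv.
  destruct (Hnear x Hx) as [k1 [K1 [Dxk1 Dk1x]]], (Hnear y Hy) as [k2 [K2 [Dyk2 Dk2y]]].
  destruct (geodesic_exists _ y k1 (cayley_connected Hgen y k1)) as [q1 Hq1].
  destruct (geodesic_exists _ k1 x (cayley_connected Hgen k1 x)) as [q2 Hq2].
  destruct (geodesic_exists _ k1 k2 (cayley_connected Hgen k1 k2)) as [r Hr].
  destruct (geodesic_exists _ k2 y (cayley_connected Hgen k2 y)) as [q3 Hq3].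
  destruct (Hthin x y k1 p q1 q2 Hp Hq1 Hq2 v Hv) as [w [[Hw|Hw] Dvw]].
  - destruct (Hthin y k1 k2 q1 r q3 Hq1 Hr Hq3 w Hw) as [u [[Hu|Hu] Dwu]].
    + destruct (HC k1 k2 r K1 K2 Hr u Hu) as [k [Kk Dk]]. exists k. split; auto.
      eapply dist_le_weaken; [eapply dist_le_trans; [eapply dist_le_trans|]; eauto|]. lia.
    + assert (Duy : dist_le (@cay_adj G S) u y c).
      { eapply dist_le_weaken; [eapply geodesic_dist_le_end; eauto|].
        eapply geodesic_length_le; eauto. }
      exists k2. split; auto.
      eapply dist_le_weaken;
        [eapply dist_le_trans; [eapply dist_le_trans; [eapply dist_le_trans|]|]; eauto|].
      lia.
  - assert (Dwx : dist_le (@cay_adj G S) w x c).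
    { eapply dist_le_weaken; [eapply geodesic_dist_le_end; eauto|].
      eapply geodesic_length_le; eauto. }
    exists k1. split; auto.
    eapply dist_le_weaken; [eapply dist_le_trans; [eapply dist_le_trans|]; eauto|]. lia.
Qed.

End CayleyGraph.

Section GraphMorphism.

Context {T : Type} (R : T -> T -> Prop) (F : T -> T).
Hypotheses (F_inj : forall x y, F x = F y -> x = y) (F_adj : forall x y, R x y -> R (F x) (F y)).

Definition map_edge (e : T * T) : T * T := (F (fst e), F (snd e)).

Lemma square_opp_map a b c d : square_opp R a b c d -> square_opp R (F a) (F b) (F c) (F d).
Proof.
  intros [H1 [H2 [H3 [H4 [H5 H6]]]]]. repeat split; auto; intros Eq; apply F_inj in Eq; auto.
Qed.

Lemma same_hyperplane_map e f : same_hyperplane R e f ->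
  same_hyperplane R (map_edge e) (map_edge f).
Proof.
  induction 1 as [e f [H|[H1 [H2 H3]]]| e | e f _ IH | e f g _ IH1 _ IH2].
  - apply rst_step. left. apply square_opp_map; auto.
  - apply rst_step. right. simpl. rewrite H2, H3. auto.
  - apply rst_refl.
  - apply rst_sym; auto.
  - eapply rst_trans; eauto.
Qed.

Lemma parallel_map e f : parallel R e f -> parallel R (map_edge e) (map_edge f).
Proof.
  induction 1 as [e f H| e | e f _ IH | e f g _ IH1 _ IH2].
  - apply rst_step. apply square_opp_map; auto.
  - apply rst_refl.
  - apply rst_sym; auto.
  - eapply rst_trans; eauto.
Qed.

End GraphMorphism.

Section Action.

Context {G : Group} {V : Type} (E : V -> V -> Prop) (act : G -> V -> V).
Hypotheses (act_action : is_action G act)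
  (act_adj : forall (g : G) x y, E x y <-> E (act g x) (act g y)).

Lemma act_inv_l g v : act (ginv g) (act g v) = v.
Proof. destruct act_action as [H1 H2]. rewrite <- H2, ginv_l. auto. Qed.

Lemma act_inj g v w : act g v = act g w -> v = w.
Proof. intros Eq. rewrite <- (act_inv_l g v), <- (act_inv_l g w), Eq. auto. Qed.

Lemma image_act_single g a : image_act act g (single a) = single (act g a).
Proof.
  apply pred_ext. intros v. unfold image_act, single. split.
  - intros [w [-> <-]]; auto.
  - intros ->. eauto.
Qed.

Lemma image_act_pair g a b : image_act act g (pair a b) = pair (act g a) (act g b).
Proof.
  apply pred_ext. intros v. unfold image_act, pair. split.
  - intros [w [[-> | ->] <-]]; auto.
  - intros [-> | ->]; eauto.
Qed.

Lemma image_act_inv_l g C : image_act act (ginv g) (image_act act g C) = C.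
Proof.
  apply pred_ext. intros v. unfold image_act. split.
  - intros [w [[u [Cu <-]] <-]]. rewrite act_inv_l; auto.
  - intros Cv. exists (act g v). split; [eauto|apply act_inv_l].
Qed.

Lemma image_act_inj g C D : image_act act g C = image_act act g D -> C = D.
Proof. intros Eq. rewrite <- (image_act_inv_l g C), <- (image_act_inv_l g D), Eq. auto. Qed.

Lemma is_cube_image_act g C n : is_cube E C n -> is_cube E (image_act act g C) n.
Proof.
  intros [f [F1 [F2 [Fi Fa]]]]. exists (fun l => act g (f l)). split; [|split; [|split]].
  - intros l Hl. exists (f l). auto.
  - intros v [w [Cw <-]]. destruct (F2 w Cw) as [l [Hl <-]]. eauto.
  - intros l l' Hl Hl' Eq. apply act_inj in Eq; auto.
  - intros l l' Hl Hl'. rewrite <- act_adj. auto.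
Qed.

Lemma subdiv_adj_image_act g C D : subdiv_adj E C D ->
  subdiv_adj E (image_act act g C) (image_act act g D).
Proof.
  intros [n [[H1 [H2 H3]]|[H1 [H2 H3]]]]; exists n; [left|right];
    (split; [apply is_cube_image_act; auto|split; [apply is_cube_image_act; auto|]]);
    intros v [w [Cw <-]]; exists w; auto.
Qed.

Lemma subdiv_hyp_stab_same_hyperplane e f g : same_hyperplane (subdiv_adj E) e f ->
  hyp_stab (subdiv_adj E) (image_act act) (fst e) (snd e) g <->
  hyp_stab (subdiv_adj E) (image_act act) (fst f) (snd f) g.
Proof.
  intros Hef. unfold hyp_stab.
  pose proof (same_hyperplane_map (subdiv_adj E) (image_act act g) (image_act_inj g)
                (subdiv_adj_image_act g) e f Hef) as Hgef.
  destruct e as [C D], f as [C' D']; simpl in *. split; intros Hs.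
  - eapply rst_trans; [apply rst_sym; eauto|]. eapply rst_trans; eauto.
  - eapply rst_trans; [eauto|]. eapply rst_trans; [eauto|]. apply rst_sym; auto.
Qed.

Definition oriented_stab (a b : V) (g : G) : Prop := parallel E (a, b) (act g a, act g b).

Lemma oriented_stab_hyp_stab a b g : oriented_stab a b g -> hyp_stab E act a b g.
Proof. apply parallel_same_hyperplane. Qed.

Hypothesis E_median : median_graph E.

Lemma subdiv_hyp_stab_basic a b g : E a b ->
  hyp_stab (subdiv_adj E) (image_act act) (single a) (pair a b) g <-> oriented_stab a b g.
Proof.
  intros Hab. unfold hyp_stab, oriented_stab. rewrite image_act_single, image_act_pair.
  split; intros H.
  - apply (subdiv_hyperplane_basic_parallel E E_median (a, b) (act g a, act g b)) in H;
      simpl; auto. apply act_adj; auto.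
  - apply (parallel_subdiv_same_hyperplane E E_median) in H. auto.
Qed.

(* An element of the stabiliser either preserves the orientation of the hyperplane or
   differs from such an element by a fixed flip [t]. *)
Lemma hyp_stab_near_oriented_stab (S : list G) a b : generates G S -> E a b ->
  exists c, forall h, hyp_stab E act a b h -> exists k, oriented_stab a b k /\
    dist_le (@cay_adj G S) h k c /\ dist_le (@cay_adj G S) k h c.
Proof.
  intros Hgen Hab.
  destruct (classic (exists t, parallel E (a, b) (act t b, act t a))) as [[t Ht]|Hno].
  - destruct (Hgen (ginv t)) as [p1 Hp1], (Hgen t) as [p2 Hp2].
    exists (length p1 + length p2). intros h Hh.
    destruct (same_hyperplane_parallel E E_median _ _ Hh) as [Hp|Hf].
    { exists h. split; auto. split; apply (dist_le_weaken _ _ _ 0); auto using dist_le_refl; lia. }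
    exists (gmul h (ginv t)). split; [|split].
    + pose proof (parallel_map E (act (gmul h (ginv t))) (act_inj _)
                    (fun x y => proj1 (act_adj _ x y)) _ _ Ht) as Ht'.
      unfold oriented_stab, map_edge in *. simpl in *.
      destruct act_action as [_ Hmul]. rewrite !Hmul, !act_inv_l in *.
      eapply rst_trans; [apply Hf|apply rst_sym, Ht'].
    + apply (dist_le_weaken _ _ _ (length p1)); [|lia].
      rewrite <- (gmul_one_r G h) at 1. apply cayley_dist_le_translate. exists p1; auto.
    + apply (dist_le_weaken _ _ _ (length p2)); [|lia].
      rewrite <- (gmul_one_r G (gmul h (ginv t))) at 1.
      replace h with (gmul (gmul h (ginv t)) t) at 2
        by (rewrite <- gassoc, ginv_l, gmul_one_r; auto).
      apply cayley_dist_le_translate. exists p2; auto.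
  - exists 0. intros h Hh. exists h. split; [|split; apply dist_le_refl].
    destruct (same_hyperplane_parallel E E_median _ _ Hh) as [Hp|Hf]; auto.
    exfalso. apply Hno. exists h. auto.
Qed.

End Action.

Theorem lemma3p4 (G : Group) (S : list G) (V : Type) (E : V -> V -> Prop)
    (act : G -> V -> V) :
  @generates G S -> @hyperbolic_wrt G S ->
  median_graph E ->
  is_action G act ->
  (forall (g : G) x y, E x y <-> E (act g x) (act g y)) ->
  (@all_hyp_stab_qc G S V E act <->
   @all_hyp_stab_qc G S (V -> Prop) (subdiv_adj E) (image_act act)).
Proof.
  intros Hgen Hhyp HM Hact Hadj. split.
  - intros HX C D HCD.
    destruct (subdiv_adj_same_hyperplane_basic E C D HCD) as [a [b [Hab Hab_CD]]].
    destruct (hyp_stab_near_oriented_stab E act Hact Hadj HM S a b Hgen Hab) as [c Hc].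
    apply (quasiconvex_ext G S (oriented_stab E act a b)).
    { intros g. rewrite (subdiv_hyp_stab_same_hyperplane E act Hact Hadj _ _ g Hab_CD).
      symmetry. apply subdiv_hyp_stab_basic; auto. }
    apply (quasiconvex_sub G S (hyp_stab E act a b) _ c).
    + apply oriented_stab_hyp_stab.
    + intros h Hh. destruct (Hc h Hh) as [k [Hk [Dhk _]]]. eauto.
    + apply HX; auto.
  - intros HXb a b Hab.
    destruct (hyp_stab_near_oriented_stab E act Hact Hadj HM S a b Hgen Hab) as [c Hc].
    apply (quasiconvex_super G S _ (oriented_stab E act a b) c Hgen Hhyp); auto.
    + apply oriented_stab_hyp_stab.
    + apply (quasiconvex_ext G S (hyp_stab (subdiv_adj E) (image_act act) (single a) (pair a b))).
      { intros g. apply subdiv_hyp_stab_basic; auto. }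
      apply HXb, subdiv_adjE. left. apply facet_single_pair; auto.
Qed.
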